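(* Let $G=(V,E)$ be a finite graph without loops and $e=uv\in E$. Let $G-e$ be the graph obtained from $G$ by removing the edge $e$, and let $G/e$ be the contraction of $e$: $u$ and $v$ are replaced by a single new vertex $w$ whose incident edges are exactly the edges other than $e$ that were incident with $u$ or $v$. Then $$\frac{\gamma_{coe}(G-e)+\gamma_{coe}(G/e)}{2}-1\leq \gamma_{coe}(G)\leq \frac{\gamma_{coe}(G-e)+\gamma_{coe}(G/e)}{2}+2.$$
   Context: Graphs have no loops. For a graph $G=(V,E)$ and $x\in V$, $\deg(x)$ is the number of edges incident to $x$. A set $D\subseteq V$ is a dominating set if every vertex of $V\setminus D$ is adjacent to at least one vertex of $D$. A dominating set $D$ is a co-even dominating set if $\deg(x)$ is even for every $x\in V\setminus D$ (degrees taken in the graph under consideration). The co-even domination number $\gamma_{coe}(G)$ is the minimum cardinality of a co-even dominating set of $G$. *)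

From HB Require Import structures.
From mathcomp Require Import all_boot all_order all_algebra.
Set Implicit Arguments. Unset Strict Implicit. Unset Printing Implicit Defensive.

Record mgraph := MGraph {
  vtx : finType;
  edg : finType;
  ep1 : edg -> vtx;
  ep2 : edg -> vtx }.

Section Defs.
Variable G : mgraph.

Definition loopless : Prop := forall f : edg G, ep1 f != ep2 f.

Definition joins (f : edg G) (x y : vtx G) : bool :=
  ((ep1 f == x) && (ep2 f == y)) || ((ep1 f == y) && (ep2 f == x)).

Definition adjacent (x y : vtx G) : bool := [exists f : edg G, joins f x y].

Definition incident (x : vtx G) (f : edg G) : bool := (ep1 f == x) || (ep2 f == x).

Definition deg (x : vtx G) : nat := #|[set f : edg G | incident x f]|.

Definition dominating (D : {set vtx G}) : bool :=
  [forall x : vtx G, (x \notin D) ==> [exists y : vtx G, (y \in D) && adjacent x y]].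

Definition co_even_dominating (D : {set vtx G}) : bool :=
  dominating D && [forall x : vtx G, (x \notin D) ==> ~~ odd (deg x)].

(* minimum cardinality of a co-even dominating set (V itself is one, so
   the default #|V| of the min is never below the true minimum) *)
Definition gamma_coe : nat :=
  \big[minn/#|vtx G|]_(D : {set vtx G} | co_even_dominating D) #|D|.

End Defs.

Definition del_edge (G : mgraph) (e : edg G) : mgraph :=
  @MGraph (vtx G) {f : edg G | f != e}
          (fun f => ep1 (val f)) (fun f => ep2 (val f)).

(* G / e : vertices other than the endpoints u, v of e, plus a new vertex w = None;
   edges are the edges other than e, with u and v mapped to w. *)
Definition contr_vtx (G : mgraph) (e : edg G) : finType :=
  option {x : vtx G | (x != ep1 e) && (x != ep2 e)}.

Definition contr_map (G : mgraph) (e : edg G) (x : vtx G) : contr_vtx e :=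
  insub x.

Definition contract (G : mgraph) (e : edg G) : mgraph :=
  @MGraph (contr_vtx e) {f : edg G | f != e}
          (fun f => contr_map e (ep1 (val f))) (fun f => contr_map e (ep2 (val f))).

From HB Require Import structures.
From mathcomp Require Import all_boot all_order all_algebra.
From mathcomp Require Import lra.
Import Order.TTheory GRing.Theory Num.Theory.

(* Adding both endpoints of e to a co-even dominating set repairs whatever
   deleting e, or undoing its contraction, can break, since every other vertex
   keeps its degree and its neighbours; hence gamma(G) and gamma(G - e) differ
   by at most 2, and gamma(G) <= gamma(G / e) + 2.  Conversely, the image of a
   co-even dominating set of G under the contraction map is co-even dominating
   in G / e: as e is the only edge joining its endpoints u and v, the merged
   vertex has degree deg u + deg v - 2, which is even whenever u and v are both
   outside the set.  Averaging the four inequalities gives both bounds. *)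

Lemma card_sig_neq {T : finType} (a : T) (P : pred T) :
  #|[set x : {x : T | x != a} | P (val x)]| + P a = #|[set x | P x]|.
Proof.
rewrite (cardsD1 a) inE addnC; congr (_ + _).
rewrite -(card_imset _ val_inj); apply: eq_card => x; rewrite !inE.
apply/imsetP/andP => [[y] | [xa Px]]; first by rewrite inE => Py ->; rewrite (valP y).
by exists (exist _ x xa); rewrite ?inE.
Qed.


Section CoEvenDomination.
Context {G : mgraph}.
Implicit Types (D : {set vtx G}) (x y : vtx G) (f : edg G).

Definition endpoints f : {set vtx G} := [set ep1 f; ep2 f].

Lemma card_endpoints f : #|endpoints f| <= 2.
Proof. by rewrite cards2; case: (_ != _). Qed.

Lemma incidentE x f : incident x f = (x \in endpoints f).
Proof. by rewrite /incident !inE !(eq_sym x). Qed.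

Lemma joins_endpointsl f x y : joins f x y -> x \in endpoints f.
Proof. by rewrite !inE => /orP[/andP[/eqP-> _]|/andP[_ /eqP->]]; rewrite eqxx ?orbT. Qed.

Lemma incident_joins f x y : x != y -> incident x f -> incident y f -> joins f x y.
Proof.
rewrite /incident /joins => xy.
by case/orP => /eqP fx; case/orP => /eqP fy; move: xy; rewrite -fx -fy ?eqxx ?orbT.
Qed.

Lemma joinsC f x y : joins f x y = joins f y x.
Proof. by rewrite /joins orbC. Qed.

Lemma adjacentC x y : adjacent x y = adjacent y x.
Proof. by apply: eq_existsb => f; rewrite joinsC. Qed.

Lemma co_even_dominatingP D :
  reflect (forall x, x \notin D -> (exists2 y, y \in D & adjacent x y) /\ ~~ odd (deg x))
          (co_even_dominating D).
Proof.
apply: (iffP andP) => [[/forallP domD /forallP evenD] x xD | coeD].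
  split; last exact: implyP (evenD x) xD.
  by have /existsP[y /andP[yD adj]] := implyP (domD x) xD; exists y.
split; apply/forallP => x; apply/implyP => /coeD[[y yD adj] evenx] //.
by apply/existsP; exists y; rewrite yD.
Qed.

Lemma co_even_dominatingT : co_even_dominating [set: vtx G].
Proof. by apply/andP; split; apply/forallP => x; rewrite in_setT. Qed.

Lemma gamma_coe_le D : co_even_dominating D -> gamma_coe G <= #|D|.
Proof. by rewrite -leEnat; apply: bigmin_le_cond. Qed.

Lemma gamma_coeP : {D : {set vtx G} | co_even_dominating D & gamma_coe G = #|D|}.
Proof.
have [D coeD gammaE] := @eq_bigmin _ nat _ #|vtx G| _ (@co_even_dominating G)
  (fun D => #|D|) co_even_dominatingT (fun D _ => max_card _).
exact: exist2 _ _ D coeD gammaE.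
Qed.

End CoEvenDomination.

Section Pullback.
Context {G H : mgraph} (phi : vtx G -> vtx H) (S : {set vtx G}).
Hypothesis deg_phi : forall x, x \notin S -> deg (phi x) = deg x.
Hypothesis adjacent_phi : forall x b, x \notin S -> adjacent (phi x) b ->
  exists2 y, phi y = b & adjacent x y.

Lemma co_even_dominating_preimset (D : {set vtx H}) :
  co_even_dominating D -> co_even_dominating (phi @^-1: D :|: S).
Proof.
move/co_even_dominatingP => coeD; apply/co_even_dominatingP => x.
rewrite !inE negb_or => /andP[xD xS].
have [[b bD /(adjacent_phi _ _ xS)[y phiy adj]] evenx] := coeD _ xD.
split; last by rewrite -deg_phi.
by exists y; rewrite // !inE phiy bD.
Qed.

Hypothesis phi_inj : {in ~: S &, injective phi}.

Lemma gamma_coe_pullback : gamma_coe G <= gamma_coe H + #|S|.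
Proof.
have [D coeD ->] := gamma_coeP (G := H).
apply: leq_trans (gamma_coe_le _ (co_even_dominating_preimset _ coeD)) _.
rewrite cardsU -(cardsID S (phi @^-1: D)) -addnA addKn leq_add2r.
have injA : {in phi @^-1: D :\: S &, injective phi}.
  by apply: sub_in2 phi_inj => x; rewrite !inE => /andP[].
rewrite -(card_in_imset injA).
by apply/subset_leq_card/subsetP => _ /imsetP[x + ->]; rewrite !inE => /andP[].
Qed.

End Pullback.

Section EdgeDeletion.
Context {G : mgraph} (e : edg G).

Lemma deg_del_edge x : x \notin endpoints e -> deg (G := del_edge e) x = deg x.
Proof.
move=> xe; rewrite /deg -(card_sig_neq e (incident x)) incidentE (negbTE xe) addn0.
by apply: eq_card => f; rewrite !inE.
Qed.

Lemma adjacent_del_edge x y :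
  x \notin endpoints e -> adjacent (G := del_edge e) x y = adjacent x y.
Proof.
move=> xe; apply/existsP/existsP => [[f adj] | [f adj]]; first by exists (val f).
have fe : f != e by apply: contraNneq xe => <-; exact: joins_endpointsl adj.
by exists (exist _ f fe).
Qed.

Lemma gamma_coe_del_edge_le : gamma_coe (del_edge e) <= gamma_coe G + 2.
Proof.
have adjE x y : x \notin endpoints e -> adjacent x y ->
    exists2 y', id y' = y & adjacent (G := del_edge e) x y'.
  by move=> xe; rewrite -adjacent_del_edge // => adj; exists y.
have degE x : x \notin endpoints e -> deg (id x) = deg (G := del_edge e) x.
  by move/deg_del_edge.
apply: leq_trans (gamma_coe_pullback (G := del_edge e) (H := G) id _ degE adjE _) _ => //.
by rewrite leq_add2l; exact: (card_endpoints e).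
Qed.

Lemma gamma_coe_le_del_edge : gamma_coe G <= gamma_coe (del_edge e) + 2.
Proof.
have adjE x y : x \notin endpoints e -> adjacent (G := del_edge e) x y ->
    exists2 y', id y' = y & adjacent x y'.
  by move=> xe; rewrite adjacent_del_edge // => adj; exists y.
apply: leq_trans (gamma_coe_pullback (G := G) (H := del_edge e) id _
                    deg_del_edge adjE _) _ => //.
by rewrite leq_add2l; exact: (card_endpoints e).
Qed.

End EdgeDeletion.

Section Contraction.
Context {G : mgraph} (e : edg G).
Local Notation phi := (contr_map e).

Lemma contr_map_val s : phi (val s) = Some s.
Proof. exact: valK. Qed.

Lemma contr_map_eqNone x : (phi x == None) = (x \in endpoints e).
Proof.
rewrite /contr_map !inE; case: insubP => [s | ] /=.
  by case/andP => /negbTE-> /negbTE->.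
by rewrite negb_and !negbK.
Qed.

Lemma contr_map_endpoint x : x \in endpoints e -> phi x = None.
Proof. by move=> xe; apply/eqP; rewrite contr_map_eqNone. Qed.

Lemma contr_map_eq x z : x \notin endpoints e -> (phi z == phi x) = (z == x).
Proof.
move=> xe; have xP : (x != ep1 e) && (x != ep2 e) by rewrite -negb_or -in_set2.
rewrite [phi x]/contr_map insubT /contr_map; case: insubP => [s _ <- | zP] /=.
  by rewrite (inj_eq (@Some_inj _)) -val_eqE SubK.
by apply/esym/negbTE; apply: contraNneq zP => ->.
Qed.

Lemma val_notin_endpoints (s : {x : vtx G | (x != ep1 e) && (x != ep2 e)}) :
  val s \notin endpoints e.
Proof. by rewrite !inE negb_or; exact: valP s. Qed.

Lemma deg_contract x : x \notin endpoints e -> deg (G := contract e) (phi x) = deg x.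
Proof.
move=> xe; rewrite /deg -(card_sig_neq e (incident x)) incidentE (negbTE xe) addn0.
by apply: eq_card => f; rewrite !inE /incident /= !contr_map_eq.
Qed.

Lemma adjacent_contract_preim x b : x \notin endpoints e ->
  adjacent (G := contract e) (phi x) b -> exists2 y, phi y = b & adjacent x y.
Proof.
move=> xe /existsP[f]; rewrite /joins /= !contr_map_eq //.
case/orP => [/andP[/eqP fx /eqP <-] | /andP[/eqP <- /eqP fx]];
  [exists (ep2 (val f)) | exists (ep1 (val f))] => //;
  by apply/existsP; exists (val f); rewrite /joins fx !eqxx ?orbT.
Qed.

Lemma adjacent_contract x y : x \notin endpoints e ->
  adjacent x y -> adjacent (G := contract e) (phi x) (phi y).
Proof.
move=> xe /existsP[f fxy].
have fe : f != e by apply: contraNneq xe => <-; exact: joins_endpointsl fxy.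
apply/existsP; exists (exist _ f fe); move: fxy; rewrite /joins /=.
by case/orP => /andP[/eqP-> /eqP->]; rewrite !eqxx ?orbT.
Qed.

Lemma gamma_coe_le_contract : gamma_coe G <= gamma_coe (contract e) + 2.
Proof.
have phi_inj : {in ~: endpoints e &, injective phi}.
  by move=> x y; rewrite !inE -!in_set2 => _ ye /eqP; rewrite contr_map_eq // => /eqP.
apply: leq_trans (gamma_coe_pullback (H := contract e) phi _ deg_contract
                    adjacent_contract_preim phi_inj) _.
by rewrite leq_add2l card_endpoints.
Qed.

Hypothesis loopless_G : loopless G.
Hypothesis no_parallel_e : forall f : edg G, f != e -> ~~ joins f (ep1 e) (ep2 e).

Lemma incident_endpoints f : incident (ep1 e) f && incident (ep2 e) f = (f == e).
Proof.
have [-> | fe] := eqVneq f e; first by rewrite /incident !eqxx !orbT.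
apply/negbTE; move: (no_parallel_e _ fe); apply: contra => /andP[].
exact: incident_joins (loopless_G e).
Qed.

Lemma deg_contract_None : deg (G := contract e) None + 2 = deg (ep1 e) + deg (ep2 e).
Proof.
rewrite /deg -cardsUI.
have -> : [set f | incident (ep1 e) f] :&: [set f | incident (ep2 e) f] = [set e].
  by apply/setP => f; rewrite !inE incident_endpoints.
have -> : [set f | incident (ep1 e) f] :|: [set f | incident (ep2 e) f] =
          [set f | incident (ep1 e) f || incident (ep2 e) f].
  by apply/setP => f; rewrite !inE.
rewrite -(card_sig_neq e (fun f => incident (ep1 e) f || incident (ep2 e) f)).
rewrite /incident !eqxx cards1 -addnA; congr (_ + _).
by apply: eq_card => f; rewrite !inE /= !contr_map_eqNone !inE orbACA.
Qed.

Lemma co_even_dominating_imset D :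
  co_even_dominating D -> co_even_dominating (G := contract e) (phi @: D).
Proof.
move/co_even_dominatingP => coeD; apply/co_even_dominatingP => -[s|] sD.
  have xD : val s \notin D by apply: contra sD => xD; rewrite -contr_map_val imset_f.
  have [[y yD adj] evenx] := coeD _ xD.
  rewrite -contr_map_val deg_contract ?val_notin_endpoints //; split=> //.
  exists (phi y); first exact: imset_f.
  exact: adjacent_contract (val_notin_endpoints s) adj.
have endsND x : x \in endpoints e -> x \notin D.
  by move=> xe; apply: contra sD => xD; rewrite -(contr_map_endpoint _ xe) imset_f.
have [[y yD adj] evenu] := coeD _ (endsND _ (set21 _ _)).
have [_ evenv] := coeD _ (endsND _ (set22 _ _)).
split.
  have ye : y \notin endpoints e by apply: contraL yD; exact: endsND.
  exists (phi y); first exact: imset_f.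
  rewrite adjacentC -(contr_map_endpoint _ (set21 _ _)).
  by apply: adjacent_contract ye _; rewrite adjacentC.
have := congr1 odd deg_contract_None.
by rewrite !oddD (negbTE evenu) (negbTE evenv) /= addbF => ->.
Qed.

Lemma gamma_coe_contract_le : gamma_coe (contract e) <= gamma_coe G.
Proof.
have [D coeD ->] := gamma_coeP (G := G).
exact: leq_trans (gamma_coe_le _ (co_even_dominating_imset _ coeD)) (leq_imset_card _ _).
Qed.

End Contraction.

Local Open Scope ring_scope.

Theorem mainTheorem7 (G : mgraph) (e : edg G) :
  loopless G ->
  (* no other edge joins the endpoints of e, so that G/e is again loopless *)
  (forall f : edg G, f != e -> ~~ joins f (ep1 e) (ep2 e)) ->
  ((gamma_coe (del_edge e))%:R + (gamma_coe (contract e))%:R) / 2 - 1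
    <= (gamma_coe G)%:R :> rat /\
  (gamma_coe G)%:R
    <= ((gamma_coe (del_edge e))%:R + (gamma_coe (contract e))%:R) / 2 + 2 :> rat.
Proof.
move=> loopless_G no_parallel_e.
have := gamma_coe_del_edge_le e; have := gamma_coe_contract_le e loopless_G no_parallel_e.
have := gamma_coe_le_del_edge e; have := gamma_coe_le_contract e.
rewrite -!(ler_nat rat) !natrD => *; split; lra.
Qed.
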